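(* Let $\mathcal L_{\mathcal N}=(\mathcal L,[\cdot_\lambda\cdot]_{\mathcal L},\mathcal N)$ and $\mathcal H_{\mathcal Q}=(\mathcal H,[\cdot_\lambda\cdot]_{\mathcal H},\mathcal Q)$ be Nijenhuis Lie conformal algebras, let $0\to\mathcal H_{\mathcal Q}\xrightarrow{inc}\mathcal E_{\mathcal R}\xrightarrow{proj}\mathcal L_{\mathcal N}\to0$ be a non-abelian extension with section $s$, and let $(\chi_\lambda,\rho,\Phi)$ be the non-abelian $2$-cocycle induced by $s$. A pair $(\alpha,\beta)\in\mathrm{Aut}(\mathcal H_{\mathcal Q})\times\mathrm{Aut}(\mathcal L_{\mathcal N})$ is inducible if and only if the non-abelian $2$-cocycles $(\chi_\lambda,\rho,\Phi)$ and $(\chi^{(\alpha,\beta)}_\lambda,\rho^{(\alpha,\beta)},\Phi^{(\alpha,\beta)})$ are equivalent; in other words, if and only if the Wells map vanishes at $(\alpha,\beta)$.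
   Context: All spaces over $\mathbb C$. A Lie conformal algebra is a $\mathbb C[\partial]$-module with a $\mathbb C$-bilinear $\lambda$-bracket satisfying $[\partial a_\lambda b]=-\lambda[a_\lambda b]$, $[a_\lambda\partial b]=(\partial+\lambda)[a_\lambda b]$, $[a_\lambda b]=-[b_{-\partial-\lambda}a]$, $[a_\lambda[b_\mu c]]=[[a_\lambda b]_{\lambda+\mu}c]+[b_\mu[a_\lambda c]]$. A Nijenhuis operator is a $\mathbb C[\partial]$-linear $\mathcal N$ with $[\mathcal N(p)_\lambda\mathcal N(q)]=\mathcal N([\mathcal N(p)_\lambda q]+[p_\lambda\mathcal N(q)]-\mathcal N([p_\lambda q]))$; a Nijenhuis Lie conformal algebra is a Lie conformal algebra with a Nijenhuis operator; morphisms are bracket-preserving $\mathbb C[\partial]$-linear maps intertwining the operators; $\mathrm{Aut}$ denotes bijective self-morphisms. A non-abelian extension: a Nijenhuis Lie conformal algebra $\mathcal E_{\mathcal R}=(\mathcal E,[\cdot_\lambda\cdot]_{\mathcal E},\mathcal R)$ with a short exact sequence of morphisms as displayed, split as $\mathbb C[\partial]$-modules; $\mathcal H\subset\mathcal E$, $\mathcal R|_{\mathcal H}=\mathcal Q$. A section is a $\mathbb C[\partial]$-linear $s$ with $proj\circ s=\mathrm{id}$; it induces $\chi_\lambda(p,q)=[s(p)_\lambda s(q)]_{\mathcal E}-s([p_\lambda q]_{\mathcal L})$, $\rho(p)_\lambda h=[s(p)_\lambda h]_{\mathcal E}$, $\Phi(p)=\mathcal R(s(p))-s(\mathcal N(p))$.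 A non-abelian $2$-cocycle is a triple $(\chi_\lambda:\mathcal L\otimes\mathcal L\to\mathcal H[\lambda],\ \rho:\mathcal L\otimes\mathcal H\to\mathcal H[\lambda],\ \Phi:\mathcal L\to\mathcal H)$ satisfying, for $p,q,r\in\mathcal L$, $h\in\mathcal H$: (i) $\rho(p)_\lambda\rho(q)_\mu h-\rho(q)_\mu\rho(p)_\lambda h-\rho([p_\lambda q]_{\mathcal L})_{\lambda+\mu}h=[\chi_\lambda(p,q)_{\lambda+\mu}h]_{\mathcal H}$; (ii) $\rho(p)_\lambda\chi_\mu(q,r)+\rho(q)_\mu\chi_\lambda(r,p)+\rho(r)_{-\partial-\lambda-\mu}\chi_\lambda(p,q)-\chi_{\lambda+\mu}([q_\mu r]_{\mathcal L},p)-\chi_{\lambda+\mu}([r_{-\partial-\lambda}p]_{\mathcal L},q)-\chi_{\lambda+\mu}([p_\lambda q]_{\mathcal L},r)=0$; (iii) $\rho(\mathcal Np)_\lambda\mathcal Q(h)=\mathcal Q(\rho(\mathcal Np)_\lambda h+\rho(p)_\lambda\mathcal Q(h)-\mathcal Q(\rho(p)_\lambda h))+\mathcal Q([\Phi(p)_\lambda h]_{\mathcal H})-[\Phi(p)_\lambda\mathcal Q(h)]_{\mathcal H}$; (iv) $\chi_\lambda(\mathcal Np,\mathcal Nq)-\mathcal Q(\chi_\lambda(\mathcal Np,q)+\chi_\lambda(p,\mathcal Nq)-\mathcal Q\chi_\lambda(p,q))-\Phi([\mathcal N(p)_\lambda q]_{\mathcal L}+[p_\lambda\mathcal N(q)]_{\mathcal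 L}-\mathcal N[p_\lambda q]_{\mathcal L})+\rho(\mathcal Np)_\lambda\Phi(q)-\rho(\mathcal Nq)_{-\partial-\lambda}\Phi(p)+\mathcal Q(\rho(q)_{-\partial-\lambda}\Phi(p)-\rho(p)_\lambda\Phi(q)+\Phi([p_\lambda q]_{\mathcal L}))+[\Phi(p)_\lambda\Phi(q)]_{\mathcal H}=0$. Two such triples $(\chi,\rho,\Phi),(\chi',\rho',\Phi')$ are equivalent if there is a linear $\tau:\mathcal L\to\mathcal H$ with $\rho(p)_\lambda h-\rho'(p)_\lambda h=[\tau(p)_\lambda h]_{\mathcal H}$, $\chi_\lambda(p,q)-\chi'_\lambda(p,q)=[\tau(p)_\lambda\tau(q)]_{\mathcal H}-\tau([p_\lambda q]_{\mathcal L})+\rho'(p)_\lambda\tau(q)-\rho'(q)_{-\partial-\lambda}\tau(p)$, $\Phi(p)-\Phi'(p)=\mathcal Q\tau(p)-\tau\mathcal N(p)$; $H^2_{nab}(\mathcal L_{\mathcal N},\mathcal H_{\mathcal Q})$ is the set of equivalence classes. The twisted triple is $\chi^{(\alpha,\beta)}_\lambda(p,q)=\alpha\chi_\lambda(\beta^{-1}p,\beta^{-1}q)$, $\rho^{(\alpha,\beta)}(p)_\lambda h=\alpha(\rho(\beta^{-1}p)_\lambda\alpha^{-1}h)$, $\Phi^{(\alpha,\beta)}(p)=\alpha\Phi(\beta^{-1}p)$. The Wells map $\mathfrak W:\mathrm{Aut}(\mathcal H_{\mathcal Q})\times\mathrm{Aut}(\mathcal L_{\mathcal N})\to H^2_{nab}(\mathcal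 L_{\mathcal N},\mathcal H_{\mathcal Q})$ is $\mathfrak W(\alpha,\beta)=[(\chi^{(\alpha,\beta)}_\lambda,\rho^{(\alpha,\beta)},\Phi^{(\alpha,\beta)})-(\chi_\lambda,\rho,\Phi)]$; ''$\mathfrak W$ vanishes at $(\alpha,\beta)$'' means this class is trivial. Let $\mathrm{Aut}_{\mathcal H}(\mathcal E_{\mathcal R})=\{\gamma\in\mathrm{Aut}(\mathcal E_{\mathcal R}):\gamma(\mathcal H)=\mathcal H\}$ and $\Pi(\gamma)=(\gamma|_{\mathcal H},proj\circ\gamma\circ s)$; $(\alpha,\beta)$ is inducible if it lies in the image of $\Pi$. *)

From HB Require Import structures.
From mathcomp Require Import all_boot all_order all_algebra.
From mathcomp Require Import complex.
From mathcomp Require Import reals.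
Set Implicit Arguments. Unset Strict Implicit. Unset Printing Implicit Defensive.
Import Order.TTheory GRing.Theory Num.Theory.
Local Open Scope ring_scope.

(*   A C[d]-module is a K-vector space A (lmodType K) with a K-linear        *)
(*   endomorphism d.  An element of A[lambda] is a coefficient list           *)
(*   p : seq A (p`_i is the coefficient of lambda^i); two such lists denote   *)
(*   the same polynomial iff they have the same evaluations at every scalar   *)
(*   (K is infinite), so all polynomial identities are stated through        *)
(*   evaluation at scalars lambda = x, mu = y in K.                          *)

Section Defs.
Variable K : fieldType.

Definition klinear (A B : lmodType K) (f : A -> B) :=
  forall (k : K) (a b : A), f (k *: a + b) = k *: f a + f b.

Definition lev (A : lmodType K) (p : seq A) (x : K) : A :=
  \sum_(i < size p) x ^+ i *: p`_i.

(* p(lambda) evaluated at lambda = -d - x, d acting on the coefficients,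
   i.e. sum_i (-d - x)^i (p_i) *)
Definition levT (A : lmodType K) (d : A -> A) (p : seq A) (x : K) : A :=
  \sum_(i < size p) iter i (fun v => - d v - x *: v) p`_i.

(* A Nijenhuis Lie conformal algebra: carrier, derivation d, lambda-bracket
   [a_lambda b] (coefficient list), Nijenhuis operator N. *)
Record NLCA := MkNLCA {
  ncar : lmodType K;
  nd : ncar -> ncar;
  nbr : ncar -> ncar -> seq ncar;
  nN : ncar -> ncar }.

Definition is_LCA (A : lmodType K) (d : A -> A) (br : A -> A -> seq A) :=
  klinear d /\
  (forall b x, klinear (fun a => lev (br a b) x)) /\
  (forall a x, klinear (fun b => lev (br a b) x)) /\
  (forall a b x, lev (br (d a) b) x = - (x *: lev (br a b) x)) /\
  (forall a b x, lev (br a (d b)) x = d (lev (br a b) x) + x *: lev (br a b) x) /\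
  (forall a b x, lev (br a b) x = - levT d (br b a) x) /\
  (forall a b c x y,
     lev (br a (lev (br b c) y)) x =
     lev (br (lev (br a b) x) c) (x + y) + lev (br b (lev (br a c) x)) y).

Definition is_Nijenhuis (A : lmodType K) (d : A -> A) (br : A -> A -> seq A)
    (N : A -> A) :=
  [/\ klinear N, (forall a, N (d a) = d (N a)) &
      forall p q x, lev (br (N p) (N q)) x =
        N (lev (br (N p) q) x + lev (br p (N q)) x - N (lev (br p q) x))].

Definition is_NLCA (A : NLCA) :=
  is_LCA (@nd A) (@nbr A) /\ is_Nijenhuis (@nd A) (@nbr A) (@nN A).

Definition dlinear (A B : NLCA) (f : ncar A -> ncar B) :=
  klinear f /\ forall a, f (nd a) = nd (f a).

Definition nmorph (A B : NLCA) (f : ncar A -> ncar B) :=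
  [/\ dlinear f,
      (forall a b x, f (lev (nbr a b) x) = lev (nbr (f a) (f b)) x) &
      (forall a, f (nN a) = nN (f a))].

Definition naut (A : NLCA) (f g : ncar A -> ncar A) :=
  [/\ nmorph f, cancel f g & cancel g f].

Definition nab_extension (H E L : NLCA) (inc : ncar H -> ncar E)
    (proj : ncar E -> ncar L) :=
  is_NLCA H /\ is_NLCA E /\ is_NLCA L /\
  nmorph inc /\ nmorph proj /\
  injective inc /\ (forall p, exists e, proj e = p) /\
  (forall e, proj e = 0 <-> exists h, e = inc h).

Definition is_section (E L : NLCA) (proj : ncar E -> ncar L)
    (s : ncar L -> ncar E) :=
  dlinear s /\ forall p, proj (s p) = p.

Definition induced_cocycle (H E L : NLCA) (inc : ncar H -> ncar E)
    (s : ncar L -> ncar E)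
    (chi : ncar L -> ncar L -> seq (ncar H))
    (rho : ncar L -> ncar H -> seq (ncar H)) (Phi : ncar L -> ncar H) :=
  [/\ (forall p q x, inc (lev (chi p q) x) =
                     lev (nbr (s p) (s q)) x - s (lev (nbr p q) x)),
      (forall p h x, inc (lev (rho p h) x) = lev (nbr (s p) (inc h)) x) &
      (forall p, inc (Phi p) = nN (s p) - s (nN p))].

Definition cocycle_equiv (H L : NLCA)
    (chi : ncar L -> ncar L -> seq (ncar H))
    (rho : ncar L -> ncar H -> seq (ncar H)) (Phi : ncar L -> ncar H)
    (chi' : ncar L -> ncar L -> seq (ncar H))
    (rho' : ncar L -> ncar H -> seq (ncar H)) (Phi' : ncar L -> ncar H) :=
  exists tau : ncar L -> ncar H, dlinear tau /\
   [/\ (forall p h x, lev (rho p h) x - lev (rho' p h) x = lev (nbr (tau p) h) x),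
       (forall p q x, lev (chi p q) x - lev (chi' p q) x =
          lev (nbr (tau p) (tau q)) x - tau (lev (nbr p q) x)
          + lev (rho' p (tau q)) x - levT (@nd H) (rho' q (tau p)) x) &
       (forall p, Phi p - Phi' p = nN (tau p) - tau (nN p))].

Definition chi_tw (H L : NLCA) (a : ncar H -> ncar H) (bi : ncar L -> ncar L)
    (chi : ncar L -> ncar L -> seq (ncar H)) :=
  fun p q => map a (chi (bi p) (bi q)).
Definition rho_tw (H L : NLCA) (a ai : ncar H -> ncar H) (bi : ncar L -> ncar L)
    (rho : ncar L -> ncar H -> seq (ncar H)) :=
  fun p h => map a (rho (bi p) (ai h)).
Definition Phi_tw (H L : NLCA) (a : ncar H -> ncar H) (bi : ncar L -> ncar L)
    (Phi : ncar L -> ncar H) :=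
  fun p => a (Phi (bi p)).

Definition inducible (H E L : NLCA) (inc : ncar H -> ncar E)
    (proj : ncar E -> ncar L) (s : ncar L -> ncar E)
    (a : ncar H -> ncar H) (b : ncar L -> ncar L) :=
  exists gamma : ncar E -> ncar E,
    nmorph gamma /\ bijective gamma /\
    (forall h, exists h', gamma (inc h) = inc h') /\
    (forall h', exists h, gamma (inc h) = inc h') /\
    (forall h, gamma (inc h) = inc (a h)) /\
    (forall p, proj (gamma (s p)) = b p).

End Defs.

Notation Cplx R := (complex.complex (Real.sort R)).

From mathcomp Require Import all_boot all_order all_algebra complex reals.
Set Implicit Arguments. Unset Strict Implicit. Unset Printing Implicit Defensive.
Import GRing.Theory Num.Theory.
Local Open Scope ring_scope.

(* A section s identifies E with H (+) L as a C[d]-module, and in these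
   coordinates the bracket and the Nijenhuis operator of E are written through
   the cocycle (chi, rho, Phi) of s.  If gamma in Aut_H(E) restricts to alpha
   and induces beta, then gamma o s o beta^-1 is a section whose cocycle is the
   twisted one; and any two sections s, s' induce equivalent cocycles, with tau
   the H-component of s - s'.  Conversely, an equivalence tau makes s - tau a
   section inducing the twisted cocycle, and the map
   inc h + s p |-> inc (alpha h) + (s - tau) (beta p) is an automorphism of E
   inducing (alpha, beta). *)

Section KLinear.
Variable K : fieldType.
Implicit Types A B C : lmodType K.

Lemma klinear0 A B (f : A -> B) : klinear f -> f 0 = 0.
Proof.
move=> fK; have := fK 1 0 0; rewrite !scale1r addr0 => f0.
by apply: (addrI (f 0)); rewrite addr0 -f0.
Qed.

Lemma klinearD A B (f : A -> B) : klinear f -> {morph f : a b / a + b}.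
Proof. by move=> fK a b; have := fK 1 a b; rewrite !scale1r. Qed.

Lemma klinearZ A B (f : A -> B) k : klinear f -> {morph f : a / k *: a}.
Proof. by move=> fK a; have := fK k a 0; rewrite !addr0 (klinear0 fK) addr0. Qed.

Lemma klinearN A B (f : A -> B) : klinear f -> {morph f : a / - a}.
Proof. by move=> fK a; rewrite -scaleN1r (klinearZ _ fK) scaleN1r. Qed.

Lemma klinearB A B (f : A -> B) : klinear f -> {morph f : a b / a - b}.
Proof. by move=> fK a b; rewrite (klinearD fK) (klinearN fK). Qed.

Lemma klinear_sum A B (f : A -> B) I (r : seq I) (P : pred I) (F : I -> A) :
  klinear f -> f (\sum_(i <- r | P i) F i) = \sum_(i <- r | P i) f (F i).
Proof. by move=> fK; rewrite (big_morph f (klinearD fK) (klinear0 fK)). Qed.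

Lemma klinear_comp A B C (f : A -> B) (g : B -> C) :
  klinear f -> klinear g -> klinear (g \o f).
Proof. by move=> fK gK k a b /=; rewrite fK gK. Qed.

Lemma klinear_add A B (f g : A -> B) :
  klinear f -> klinear g -> klinear (fun a => f a + g a).
Proof. by move=> fK gK k a b; rewrite fK gK scalerDr addrACA. Qed.

Lemma klinear_sub A B (f g : A -> B) :
  klinear f -> klinear g -> klinear (fun a => f a - g a).
Proof. by move=> fK gK k a b; rewrite fK gK scalerBr opprD addrACA. Qed.

Lemma lev_map A B (f : A -> B) (p : seq A) x :
  klinear f -> lev (map f p) x = f (lev p x).
Proof.
move=> fK; rewrite /lev size_map (klinear_sum _ _ _ fK).
by apply: eq_bigr => i _; rewrite (klinearZ _ fK) (nth_map 0).
Qed.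

Lemma iter_klinear A (d : A -> A) x n :
  klinear d -> klinear (iter n (fun v => - d v - x *: v)).
Proof.
move=> dK; have stepK : klinear (fun v => - d v - x *: v).
  by move=> k a b; rewrite dK scalerDr !opprD addrACA scalerBr !scalerN !scalerA mulrC.
by elim: n => [|n IH] //= k a b; rewrite /= IH stepK.
Qed.

Lemma levT_map A B (dA : A -> A) (dB : B -> B) (f : A -> B) (p : seq A) x :
  klinear f -> (forall a, f (dA a) = dB (f a)) ->
  levT dB (map f p) x = f (levT dA p x).
Proof.
move=> fK fd; rewrite /levT size_map (klinear_sum _ _ _ fK).
apply: eq_bigr => i _; rewrite (nth_map 0) //; move: p`_i => a.
by elim: (nat_of_ord i) => [|n /= ->] //; rewrite (klinearB fK) (klinearN fK) fd (klinearZ _ fK).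
Qed.

Lemma lev_widen A (p : seq A) N x : (size p <= N)%N ->
  lev p x = \sum_(i < N) x ^+ i *: p`_i.
Proof.
move=> le_pN; rewrite /lev (big_ord_widen _ (fun i => x ^+ i *: p`_i) le_pN).
rewrite big_mkcond; apply: eq_bigr => i _; case: ltnP => // le_pi.
by rewrite nth_default // scaler0.
Qed.

Lemma levT_widen A (d : A -> A) (p : seq A) N x : klinear d -> (size p <= N)%N ->
  levT d p x = \sum_(i < N) iter i (fun v => - d v - x *: v) p`_i.
Proof.
move=> dK le_pN.
rewrite /levT (big_ord_widen _ (fun i => iter i (fun v => - d v - x *: v) p`_i) le_pN).
rewrite big_mkcond; apply: eq_bigr => i _; case: ltnP => // le_pi.
by rewrite nth_default // (klinear0 (iter_klinear x i dK)).
Qed.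

End KLinear.

Lemma subrACA (V : zmodType) (a b c d : V) : a - b - (c - d) = a - c - (b - d).
Proof. by rewrite !opprD !opprK addrACA. Qed.

Section Coefficients.
Variables (K : numFieldType) (M : lmodType K).

(* Evaluate at 0, 1, ..., N - 1: these points are distinct in characteristic 0,
   so their Vandermonde matrix is invertible. *)
Lemma coef_eq0_of_eval_eq0 N (D : nat -> M) :
  (forall x : K, \sum_(i < N) x ^+ i *: D i = 0) -> forall i, (i < N)%N -> D i = 0.
Proof.
move=> evalD0 i0 lt_i0N.
pose a : 'rV[K]_N := \row_j (j : nat)%:R.
have Vunit : Vandermonde N a \in unitmx.
  rewrite unitmxE det_Vandermonde unitfE; apply/prodf_neq0 => i _.
  apply/prodf_neq0 => j lt_ij; rewrite !mxE subr_eq0 eqr_nat.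
  by apply/eqP => /val_inj eq_ij; move: lt_ij; rewrite eq_ij ltnn.
pose i : 'I_N := Ordinal lt_i0N; rewrite -[i0]/(nat_of_ord i).
transitivity (\sum_(k < N) (1%:M : 'M[K]_N) k i *: D k).
  rewrite (bigD1 i) //= mxE eqxx scale1r big1 ?addr0 // => k nki.
  by rewrite mxE (negbTE nki) scale0r.
rewrite -(mulmxV Vunit); under eq_bigr do rewrite mxE scaler_suml.
rewrite exchange_big big1 //= => j _.
under eq_bigr do rewrite mulrC -scalerA.
rewrite -scaler_sumr; under eq_bigr do rewrite mxE.
by rewrite evalD0 scaler0.
Qed.

Lemma lev_coefD (p q r : seq M) :
  (forall x, lev p x = lev q x + lev r x) -> forall i, p`_i = q`_i + r`_i.
Proof.
move=> pqr i; set N := maxn (size p) (maxn (size q) (size r)).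
have [le_pN le_qN le_rN] : [/\ size p <= N, size q <= N & size r <= N]%N.
  by rewrite !leq_max !leqnn !orbT.
have [lt_iN|le_Ni] := ltnP i N; last first.
  by rewrite !nth_default ?addr0 //; apply: leq_trans le_Ni.
apply/eqP; rewrite -subr_eq0; apply/eqP.
apply: (@coef_eq0_of_eval_eq0 N (fun i => p`_i - (q`_i + r`_i))) lt_iN => x.
under eq_bigr do rewrite scalerBr scalerDr.
by rewrite sumrB big_split /= -!lev_widen // pqr subrr.
Qed.

Lemma levTD (d : M -> M) (p q r : seq M) : klinear d ->
  (forall x, lev p x = lev q x + lev r x) ->
  forall x, levT d p x = levT d q x + levT d r x.
Proof.
move=> dK pqr x; set N := maxn (size p) (maxn (size q) (size r)).
have [le_pN le_qN le_rN] : [/\ size p <= N, size q <= N & size r <= N]%N.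
  by rewrite !leq_max !leqnn !orbT.
rewrite !(levT_widen x dK (_ : size _ <= N)%N) // -big_split.
by apply: eq_bigr => i _; rewrite (lev_coefD pqr) (klinearD (iter_klinear x i dK)).
Qed.

Lemma eq_levT (d : M -> M) (p q : seq M) : klinear d ->
  (forall x, lev p x = lev q x) -> forall x, levT d p x = levT d q x.
Proof.
move=> dK pq x; rewrite (@levTD d p q [::] dK) => [|y].
  by rewrite /levT big_ord0 addr0.
by rewrite pq /lev big_ord0 addr0.
Qed.

End Coefficients.

Section NLCAFacts.
Variable K : fieldType.

Lemma dlinear_comp (A B C : NLCA K) (f : ncar A -> ncar B) (g : ncar B -> ncar C) :
  dlinear f -> dlinear g -> dlinear (g \o f).
Proof. by move=> [fK fd] [gK gd]; split=> [|a /=]; [apply: klinear_comp | rewrite fd gd]. Qed.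

Lemma dlinear_add (A B : NLCA K) (f g : ncar A -> ncar B) : klinear (@nd _ B) ->
  dlinear f -> dlinear g -> dlinear (fun a => f a + g a).
Proof.
by move=> dK [fK fd] [gK gd]; split=> [|a]; [apply: klinear_add | rewrite fd gd (klinearD dK)].
Qed.

Lemma dlinear_sub (A B : NLCA K) (f g : ncar A -> ncar B) : klinear (@nd _ B) ->
  dlinear f -> dlinear g -> dlinear (fun a => f a - g a).
Proof.
by move=> dK [fK fd] [gK gd]; split=> [|a]; [apply: klinear_sub | rewrite fd gd (klinearB dK)].
Qed.

Lemma naut_sym (A : NLCA K) (f g : ncar A -> ncar A) : naut f g -> naut g f.
Proof.
move=> [[[fK fd] fbr fN] fgK gfK]; have f_inj := can_inj fgK.
split=> //; split; first split.
- by move=> k a b; apply: f_inj; rewrite fK !gfK.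
- by move=> a; apply: f_inj; rewrite fd !gfK.
- by move=> a b x; apply: f_inj; rewrite fbr !gfK.
- by move=> a; apply: f_inj; rewrite fN !gfK.
Qed.

Variables (A : lmodType K) (d : A -> A) (br : A -> A -> seq A).
Hypothesis lca : is_LCA d br.

Lemma lca_klinear_d : klinear d.
Proof. by case: lca. Qed.

Lemma lca_klinearl b x : klinear (fun a => lev (br a b) x).
Proof. by case: lca => _ []. Qed.

Lemma lca_klinearr a x : klinear (fun b => lev (br a b) x).
Proof. by case: lca => _ [_ []]. Qed.

Lemma lca_skew a b x : lev (br a b) x = - levT d (br b a) x.
Proof. by case: lca => _ [_ [_ [_ [_ []]]]]. Qed.

End NLCAFacts.

Section Extension.
Variables (K : numFieldType) (H E L : NLCA K).
Variables (inc : ncar H -> ncar E) (proj : ncar E -> ncar L).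
Hypothesis ext : nab_extension inc proj.

Lemma lca_H : is_LCA (@nd _ H) (@nbr _ H).
Proof. by case: ext => [[]]. Qed.

Lemma lca_E : is_LCA (@nd _ E) (@nbr _ E).
Proof. by case: ext => _ [[]]. Qed.

Lemma klinear_NE : klinear (@nN _ E).
Proof. by case: ext => _ [[_ []]]. Qed.

Lemma inc_nmorph : nmorph inc.
Proof. by case: ext => _ [_ [_ []]]. Qed.

Lemma proj_nmorph : nmorph proj.
Proof. by case: ext => _ [_ [_ [_ []]]]. Qed.

Lemma inc_inj : injective inc.
Proof. by case: ext => _ [_ [_ [_ [_ []]]]]. Qed.

Lemma ker_proj e : proj e = 0 <-> exists h, e = inc h.
Proof. by case: ext => _ [_ [_ [_ [_ [_ []]]]]]. Qed.

Lemma proj_inc h : proj (inc h) = 0.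
Proof. by apply/ker_proj; exists h. Qed.

Section Coordinates.
Variable s : ncar L -> ncar E.
Hypothesis sec : is_section proj s.

Lemma hcomp_subproof e : exists h, inc h == e - s (proj e).
Proof.
have [[[projK _] _ _] [_ projsK]] := (proj_nmorph, sec).
have /ker_proj[h eh] : proj (e - s (proj e)) = 0 by rewrite (klinearB projK) projsK subrr.
by exists h; rewrite eh.
Qed.

Definition hcomp e := xchoose (hcomp_subproof e).

Lemma inc_hcomp e : inc (hcomp e) = e - s (proj e).
Proof. exact: eqP (xchooseP (hcomp_subproof e)). Qed.

Lemma coordP e : exists h p, e = inc h + s p.
Proof. by exists (hcomp e), (proj e); rewrite inc_hcomp subrK. Qed.

Lemma proj_coord h p : proj (inc h + s p) = p.
Proof.
have [[[projK _] _ _] [_ projsK]] := (proj_nmorph, sec).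
by rewrite (klinearD projK) proj_inc projsK add0r.
Qed.

Lemma hcomp_coord h p : hcomp (inc h + s p) = h.
Proof. by apply: inc_inj; rewrite inc_hcomp proj_coord addrK. Qed.

Lemma hcomp_dlinear : dlinear hcomp.
Proof.
have [[[incK incd] _ _] [[projK projd] _ _]] := (inc_nmorph, proj_nmorph).
have [[sK sd] _] := sec.
split=> [k a b | a]; apply: inc_inj.
  by rewrite incK !inc_hcomp projK sK scalerBr opprD addrACA.
by rewrite incd !inc_hcomp projd sd (klinearB (lca_klinear_d lca_E)).
Qed.

Lemma levT_br_inc (rho : ncar L -> ncar H -> seq (ncar H)) :
  (forall p h x, inc (lev (rho p h) x) = lev (nbr (s p) (inc h)) x) ->
  forall p h x, levT (@nd _ E) (nbr (s p) (inc h)) x = inc (levT (@nd _ H) (rho p h) x).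
Proof.
have [[incK incd] _ _] := inc_nmorph.
move=> rhoE p h x; rewrite -(levT_map _ _ incK incd).
by apply: eq_levT (lca_klinear_d lca_E) _ _ => y; rewrite (lev_map _ _ incK) rhoE.
Qed.

Variables (chi : ncar L -> ncar L -> seq (ncar H)).
Variables (rho : ncar L -> ncar H -> seq (ncar H)) (Phi : ncar L -> ncar H).
Hypothesis coc : induced_cocycle inc s chi rho Phi.

Lemma br_coord h1 p1 h2 p2 x :
  lev (nbr (inc h1 + s p1) (inc h2 + s p2)) x =
  inc (lev (nbr h1 h2) x - levT (@nd _ H) (rho p2 h1) x + lev (rho p1 h2) x
       + lev (chi p1 p2) x) + s (lev (nbr p1 p2) x).
Proof.
have [[[incK _] incbr _] [chiE rhoE _]] := (inc_nmorph, coc).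
rewrite (klinearD (lca_klinearl lca_E _ _)) !(klinearD (lca_klinearr lca_E _ _)).
rewrite (lca_skew lca_E (inc h1) (s p2)) (levT_br_inc rhoE).
by rewrite !(klinearD incK) (klinearN incK) incbr rhoE chiE -[in RHS]addrA subrK !addrA.
Qed.

Lemma N_coord h p : nN (inc h + s p) = inc (nN h + Phi p) + s (nN p).
Proof.
have [[[incK _] _ incN] [_ _ PhiE]] := (inc_nmorph, coc).
by rewrite (klinearD klinear_NE) (klinearD incK) incN PhiE -addrA subrK.
Qed.

End Coordinates.

Definition glue s (sec : is_section proj s) (s' : ncar L -> ncar E)
    (a : ncar H -> ncar H) (b : ncar L -> ncar L) (e : ncar E) :=
  inc (a (hcomp sec e)) + s' (b (proj e)).

Lemma glue_coord s (sec : is_section proj s) s' a b h p :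
  glue sec s' a b (inc h + s p) = inc (a h) + s' (b p).
Proof. by rewrite /glue hcomp_coord proj_coord. Qed.

Lemma glue_cancel s s' (sec : is_section proj s) (sec' : is_section proj s') a a' b b' :
  cancel a a' -> cancel b b' -> cancel (glue sec s' a b) (glue sec' s a' b').
Proof.
move=> aK bK e; have [h [p ->]] := coordP sec e.
by rewrite !glue_coord aK bK.
Qed.

Lemma glue_nmorph s s' (sec : is_section proj s) (sec' : is_section proj s')
    chi rho Phi chi' rho' Phi' a b :
  induced_cocycle inc s chi rho Phi -> induced_cocycle inc s' chi' rho' Phi' ->
  nmorph a -> nmorph b ->
  (forall p h x, a (lev (rho p h) x) = lev (rho' (b p) (a h)) x) ->
  (forall p q x, a (lev (chi p q) x) = lev (chi' (b p) (b q)) x) ->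
  (forall p, a (Phi p) = Phi' (b p)) ->
  nmorph (glue sec s' a b).
Proof.
move=> coc coc' [[aK ad] abr aN] [bl bbr bN] arho achi aPhi.
have [incl _ _] := inc_nmorph; have [projl _ _] := proj_nmorph.
split.
- apply: dlinear_add (lca_klinear_d lca_E) _ _.
    exact: dlinear_comp (dlinear_comp (hcomp_dlinear sec) (conj aK ad)) incl.
  exact: dlinear_comp (dlinear_comp projl bl) sec'.1.
- move=> e1 e2 x.
  have [[h1 [p1 ->]] [h2 [p2 ->]]] := (coordP sec e1, coordP sec e2).
  rewrite (br_coord coc) !glue_coord (br_coord coc') bbr.
  congr (inc _ + _); rewrite !(klinearD aK) (klinearN aK) abr arho achi.
  rewrite -(levT_map _ _ aK ad); congr (_ - _ + _ + _).
  by apply: eq_levT (lca_klinear_d lca_H) _ _ => y; rewrite (lev_map _ _ aK) arho.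
- move=> e; have [h [p ->]] := coordP sec e.
  by rewrite (N_coord coc) !glue_coord (N_coord coc') (klinearD aK) aN aPhi bN.
Qed.

Section Shift.
Variables (s s' : ncar L -> ncar E) (tau : ncar L -> ncar H).
Hypothesis sE : forall p, s p = inc (tau p) + s' p.

Lemma rho_shift p h x :
  lev (nbr (s p) (inc h)) x - lev (nbr (s' p) (inc h)) x = inc (lev (nbr (tau p) h) x).
Proof.
have [_ incbr _] := inc_nmorph.
by rewrite -(klinearB (lca_klinearl lca_E _ _)) sE addrK incbr.
Qed.

Lemma Phi_shift p :
  nN (s p) - s (nN p) - (nN (s' p) - s' (nN p)) = inc (nN (tau p) - tau (nN p)).
Proof.
have [[incK _] _ incN] := inc_nmorph.
by rewrite subrACA -!(klinearB klinear_NE) !sE !addrK (klinearB incK) incN.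
Qed.

Lemma chi_shift (rho' : ncar L -> ncar H -> seq (ncar H)) :
  (forall p h x, inc (lev (rho' p h) x) = lev (nbr (s' p) (inc h)) x) ->
  forall p q x,
  lev (nbr (s p) (s q)) x - s (lev (nbr p q) x)
    - (lev (nbr (s' p) (s' q)) x - s' (lev (nbr p q) x)) =
  inc (lev (nbr (tau p) (tau q)) x - tau (lev (nbr p q) x)
       + lev (rho' p (tau q)) x - levT (@nd _ H) (rho' q (tau p)) x).
Proof.
have [[incK _] incbr _] := inc_nmorph.
move=> rhoE' p q x; rewrite !(klinearD incK) !(klinearN incK) incbr rhoE'.
rewrite -(levT_br_inc rhoE') -(lca_skew lca_E).
rewrite !sE (klinearD (lca_klinearl lca_E _ _)) !(klinearD (lca_klinearr lca_E _ _)).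
rewrite opprD addrA opprB subrKA addrAC addrA addrK.
by rewrite addrAC [in RHS]addrAC; congr (_ + _); rewrite addrAC.
Qed.

End Shift.

Variables (chi : ncar L -> ncar L -> seq (ncar H)).
Variables (rho : ncar L -> ncar H -> seq (ncar H)) (Phi : ncar L -> ncar H).
Variables (alpha alphai : ncar H -> ncar H) (beta betai : ncar L -> ncar L).
Hypotheses (alpha_aut : naut alpha alphai) (beta_aut : naut beta betai).

Lemma twisted_section_of_inducible s :
  is_section proj s -> induced_cocycle inc s chi rho Phi ->
  inducible inc proj s alpha beta ->
  exists2 s', is_section proj s' &
    induced_cocycle inc s' (chi_tw alpha betai chi)
      (rho_tw alpha alphai betai rho) (Phi_tw alpha betai Phi).
Proof.
move=> [sl _] [chiE rhoE PhiE] [g [[[gK gd] gbr gN] [_ [_ [_ [ginc gproj]]]]]].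
have [[[alphaK _] _ _] _ alphaiK] := alpha_aut.
have [[betail betaibr betaiN] betaiK _] := naut_sym beta_aut.
exists (fun p => g (s (betai p))).
  split=> [|p]; last by rewrite gproj betaiK.
  exact: dlinear_comp (dlinear_comp betail sl) (conj gK gd).
split=> [p q x | p h x | p].
- by rewrite (lev_map _ _ alphaK) -ginc chiE (klinearB gK) gbr betaibr.
- by rewrite (lev_map _ _ alphaK) -ginc rhoE gbr ginc alphaiK.
- by rewrite /Phi_tw -ginc PhiE (klinearB gK) gN betaiN.
Qed.

Lemma cocycle_equiv_of_sections s s' chi' rho' Phi' :
  is_section proj s -> is_section proj s' ->
  induced_cocycle inc s chi rho Phi -> induced_cocycle inc s' chi' rho' Phi' ->
  cocycle_equiv chi rho Phi chi' rho' Phi'.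
Proof.
move=> [sl projsK] sec' [chiE rhoE PhiE] [chiE' rhoE' PhiE'].
have [[incK incd] _ _] := inc_nmorph.
pose tau p := hcomp sec' (s p).
have sE p : s p = inc (tau p) + s' p by rewrite inc_hcomp projsK subrK.
exists tau; split; first exact: dlinear_comp sl (hcomp_dlinear sec').
split=> [p h x | p q x | p]; apply: inc_inj; rewrite (klinearB incK).
- by rewrite rhoE rhoE' (rho_shift sE).
- by rewrite chiE chiE' (chi_shift sE rhoE').
- by rewrite PhiE PhiE' (Phi_shift sE).
Qed.

Lemma induced_of_cocycle_equiv s chi' rho' Phi' :
  is_section proj s -> induced_cocycle inc s chi rho Phi ->
  cocycle_equiv chi rho Phi chi' rho' Phi' ->
  exists2 s', is_section proj s' & induced_cocycle inc s' chi' rho' Phi'.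
Proof.
move=> [sl projsK] [chiE rhoE PhiE] [tau [taul [rhoD chiD PhiD]]].
have [[incK incd] _ _] := inc_nmorph; have [[projK _] _ _] := proj_nmorph.
pose s' p := s p - inc (tau p).
have sE p : s p = inc (tau p) + s' p by rewrite addrC subrK.
have rhoE' p h x : inc (lev (rho' p h) x) = lev (nbr (s' p) (inc h)) x.
  by rewrite -(subKr (lev (rho p h) x) (lev (rho' p h) x)) rhoD (klinearB incK) rhoE
    -(rho_shift sE) subKr.
exists s'.
  split=> [|p]; last by rewrite (klinearB projK) projsK proj_inc subr0.
  exact: dlinear_sub (lca_klinear_d lca_E) sl (dlinear_comp taul (conj incK incd)).
split=> [p q x | // | p].
- by rewrite -(subKr (lev (chi p q) x) (lev (chi' p q) x)) chiD (klinearB incK) chiE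
    -(chi_shift sE rhoE') subKr.
- by rewrite -(subKr (Phi p) (Phi' p)) PhiD (klinearB incK) PhiE -(Phi_shift sE) subKr.
Qed.

Lemma inducible_of_twisted_section s s' :
  is_section proj s -> is_section proj s' -> induced_cocycle inc s chi rho Phi ->
  induced_cocycle inc s' (chi_tw alpha betai chi)
    (rho_tw alpha alphai betai rho) (Phi_tw alpha betai Phi) ->
  inducible inc proj s alpha beta.
Proof.
move=> sec sec' coc coc'.
have [alpham alphaK alphaiK] := alpha_aut; have [betam betaK betaiK] := beta_aut.
have [[[alphal _] _ _] [[betal _] _ _]] := (alpham, betam).
have [[[sl _] _] [[s'l _] _]] := (sec, sec').
have [[incK _] _ _] := inc_nmorph.
have gamma_inc h : glue sec s' alpha beta (inc h) = inc (alpha h).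
  by rewrite -[inc h]addr0 -(klinear0 sl) glue_coord (klinear0 betal) (klinear0 s'l) addr0.
exists (glue sec s' alpha beta); split; [|split; [|repeat split]].
- apply: (glue_nmorph sec sec' coc coc' alpham betam) => [p h x | p q x | p].
  + by rewrite /rho_tw (lev_map _ _ alphal) betaK alphaK.
  + by rewrite /chi_tw (lev_map _ _ alphal) !betaK.
  + by rewrite /Phi_tw betaK.
- by exists (glue sec' s alphai betai); apply: glue_cancel.
- by move=> h; exists (alpha h).
- by move=> h; exists (alphai h); rewrite gamma_inc alphaiK.
- exact: gamma_inc.
- by move=> p; rewrite -[s p]add0r -(klinear0 incK) glue_coord (proj_coord sec').
Qed.

End Extension.

Theorem theorem6p5 (R : realType)
  (H E L : NLCA (Cplx R))
  (inc : ncar H -> ncar E) (proj : ncar E -> ncar L) (s : ncar L -> ncar E)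
  (chi : ncar L -> ncar L -> seq (ncar H))
  (rho : ncar L -> ncar H -> seq (ncar H)) (Phi : ncar L -> ncar H)
  (alpha alphai : ncar H -> ncar H) (beta betai : ncar L -> ncar L) :
  nab_extension inc proj ->
  is_section proj s ->
  induced_cocycle inc s chi rho Phi ->
  naut alpha alphai -> naut beta betai ->
  (inducible inc proj s alpha beta <->
   cocycle_equiv chi rho Phi
     (chi_tw alpha betai chi) (rho_tw alpha alphai betai rho)
     (Phi_tw alpha betai Phi)).
Proof.
move=> ext sec coc alpha_aut beta_aut; split.
- case/(twisted_section_of_inducible alpha_aut beta_aut sec coc) => s' sec' coc'.
  exact (cocycle_equiv_of_sections ext sec sec' coc coc').
- case/(induced_of_cocycle_equiv ext sec coc) => s' sec' coc'.
  exact (inducible_of_twisted_section ext alpha_aut beta_aut sec sec' coc coc').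
Qed.
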